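(* Under the standing assumptions below, let $\gamma>0$ be arbitrary (such that the $g$-proximal subproblems have minimizers) and let $\{(y^t,z^t,x^t)\}$ be generated by the PR splitting iteration. Then for every $t\ge 1$, \[ \mathcal{P}_\gamma(y^{t+1},z^{t+1},x^{t+1})-\mathcal{P}_\gamma(y^t,z^t,x^t)\le \frac12\left(-3\sigma+2L+\gamma L^2\right)\|y^{t+1}-y^t\|^2, \] and moreover $2\|y^t-z^t\|=\|x^t-x^{t-1}\|\le(1+\gamma L)\|y^{t+1}-y^t\|$.
   Context: Standing assumptions: $f:\mathbb{R}^n\to\mathbb{R}$ is differentiable and strongly convex with modulus at least $\sigma>0$ (i.e. $f-\frac{\sigma}{2}\|\cdot\|^2$ is convex), and $\nabla f$ is Lipschitz continuous with modulus at most $L>0$. The function $g:\mathbb{R}^n\to(-\infty,\infty]$ is proper and lower semicontinuous, and for the $\gamma>0$ used, the set $\operatorname{Argmin}_u\{\gamma g(u)+\frac12\|u-w\|^2\}$ is nonempty for every $w\in\mathbb{R}^n$. PR splitting iteration: given $x^0$ and $\gamma>0$, for $t=0,1,2,\dots$: $y^{t+1}=\operatorname{argmin}_y\{f(y)+\frac{1}{2\gamma}\|y-x^t\|^2\}$; $z^{t+1}\in\operatorname{Argmin}_z\{g(z)+\frac{1}{2\gamma}\|2y^{t+1}-x^t-z\|^2\}$ (any choice); $x^{t+1}=x^t+2(z^{t+1}-y^{t+1})$. Merit function: $\mathcal{P}_\gamma(y,z,x):=f(y)+g(z)-\frac{3}{2\gamma}\|y-z\|^2+\frac{1}{\gamma}\langle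 x-y,z-y\rangle$. *)

From mathcomp Require Import ssreflect ssrfun ssrbool eqtype ssrnat seq fintype bigop.
From Stdlib Require Import Reals.
Open Scope R_scope.

Definition vec (n : nat) := 'I_n -> R.

Definition vadd {n} (x y : vec n) : vec n := fun i => x i + y i.
Definition vsub {n} (x y : vec n) : vec n := fun i => x i - y i.
Definition vscale {n} (a : R) (x : vec n) : vec n := fun i => a * x i.

Definition inner {n} (x y : vec n) : R := \big[Rplus/0]_(i < n) (x i * y i).
Definition vnorm {n} (x : vec n) : R := sqrt (inner x x).

Definition convex_fun {n} (h : vec n -> R) : Prop :=
  forall (x y : vec n) (lam : R), 0 <= lam <= 1 ->
    h (vadd (vscale lam x) (vscale (1 - lam) y)) <= lam * h x + (1 - lam) * h y.

Definition strongly_convex {n} (f : vec n -> R) (sigma : R) : Prop :=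
  convex_fun (fun x => f x - sigma / 2 * (vnorm x) ^ 2).

Definition is_gradient {n} (f : vec n -> R) (gradf : vec n -> vec n) : Prop :=
  forall x : vec n, forall eps : R, 0 < eps -> exists delta : R, 0 < delta /\
    forall h : vec n, 0 < vnorm h < delta ->
      Rabs (f (vadd x h) - f x - inner (gradf x) h) <= eps * vnorm h.

Definition lipschitz {n} (F : vec n -> vec n) (L : R) : Prop :=
  forall x y : vec n, vnorm (vsub (F x) (F y)) <= L * vnorm (vsub x y).

(* Extended reals (-oo, +oo]: [Some a] is the real a, [None] is +oo. *)
Definition ereal := option R.

Definition ele (a b : ereal) : Prop :=
  match a, b with
  | _, None => True
  | None, Some _ => False
  | Some a, Some b => a <= b
  end.

Definition rlt_e (a : R) (b : ereal) : Prop :=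
  match b with None => True | Some b => a < b end.

Definition eaffine (c : R) (b : ereal) (d : R) : ereal :=
  match b with None => None | Some b => Some (c * b + d) end.

Definition proper_fun {n} (g : vec n -> ereal) : Prop := exists x, g x <> None.

Definition lsc {n} (g : vec n -> ereal) : Prop :=
  forall (x : vec n) (a : R), rlt_e a (g x) ->
    exists delta, 0 < delta /\
      forall y : vec n, vnorm (vsub y x) < delta -> rlt_e a (g y).

Definition in_prox_argmin {n} (g : vec n -> ereal) (gamma : R) (w u : vec n) : Prop :=
  forall v : vec n,
    ele (eaffine gamma (g u) (1 / 2 * (vnorm (vsub u w)) ^ 2))
        (eaffine gamma (g v) (1 / 2 * (vnorm (vsub v w)) ^ 2)).

Definition PR_iter {n} (f : vec n -> R) (g : vec n -> ereal) (gamma : R)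
    (y z x : nat -> vec n) : Prop :=
  forall t : nat,
    (forall v : vec n,
       f (y (S t)) + 1 / (2 * gamma) * (vnorm (vsub (y (S t)) (x t))) ^ 2
       <= f v + 1 / (2 * gamma) * (vnorm (vsub v (x t))) ^ 2) /\
    (forall v : vec n,
       ele (eaffine 1 (g (z (S t)))
              (1 / (2 * gamma) * (vnorm (vsub (vsub (vscale 2 (y (S t))) (x t)) (z (S t)))) ^ 2))
           (eaffine 1 (g v)
              (1 / (2 * gamma) * (vnorm (vsub (vsub (vscale 2 (y (S t))) (x t)) v)) ^ 2))) /\
    x (S t) = vadd (x t) (vscale 2 (vsub (z (S t)) (y (S t)))).

Definition merit {n} (f : vec n -> R) (g : vec n -> ereal) (gamma : R)
    (y z x : vec n) : ereal :=
  eaffine 1 (g z)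
    (f y - 3 / (2 * gamma) * (vnorm (vsub y z)) ^ 2
         + 1 / gamma * inner (vsub x y) (vsub z y)).

(* The y-update is a smooth proximal step, so its optimality condition reads
   gamma * grad f (y^{t+1}) = x^t - y^{t+1}.  Hence
   x^t - x^{t-1} = gamma (grad f (y^{t+1}) - grad f (y^t)) + (y^{t+1} - y^t),
   whose norm is at most (1 + gamma L) |y^{t+1} - y^t|, while the x-update
   makes it equal to 2 (z^t - y^t).  For the merit function, an exact identity
   splits P(t+1) - P(t) into the decrease of the z-subproblem objective (<= 0 by
   minimality of z^{t+1}), the strong-convexity gap
   f(y^{t+1}) - f(y^t) - <grad f (y^{t+1}), y^{t+1} - y^t> <= -sigma/2 |dy|^2
   and gamma/2 |grad f (y^{t+1}) - grad f (y^t)|^2 <= gamma L^2/2 |dy|^2.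
   This gives the sharper bound (gamma L^2 - sigma)/2 |dy|^2, which implies the
   stated one since sigma |dy|^2 <= <d grad f, dy> <= L |dy|^2. *)

From HB Require Import structures.
From mathcomp Require Import ssreflect ssrfun ssrbool eqtype ssrnat seq fintype bigop.
From Stdlib Require Import Reals Lra Psatz FunctionalExtensionality.
Open Scope R_scope.

HB.instance Definition _ := Monoid.isComLaw.Build R 0 Rplus
  (fun a b c => esym (Rplus_assoc a b c)) Rplus_comm Rplus_0_l.

Ltac vec_ext := apply: functional_extensionality => i; rewrite /vadd /vsub /vscale.

Section InnerProduct.
Context {n : nat}.
Implicit Types u v w : vec n.

Lemma inner_comm u v : inner u v = inner v u.
Proof. by apply: eq_bigr => i _; rewrite Rmult_comm. Qed.

Lemma inner_addl u v w : inner (vadd u v) w = inner u w + inner v w.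
Proof. by rewrite /inner -big_split; apply: eq_bigr => i _; rewrite Rmult_plus_distr_r. Qed.

Lemma inner_scalel a u w : inner (vscale a u) w = a * inner u w.
Proof.
by apply: (big_rec2 (fun s1 s2 => s1 = a * s2)) => [|i s1 s2 _ ->];
  rewrite /vscale; ring.
Qed.

Lemma vsubE u v : vsub u v = vadd u (vscale (-1) v).
Proof. by vec_ext; ring. Qed.

Lemma inner_subl u v w : inner (vsub u v) w = inner u w - inner v w.
Proof.
by rewrite vsubE inner_addl inner_scalel; ring.
Qed.

Lemma inner_addr u v w : inner w (vadd u v) = inner w u + inner w v.
Proof. by rewrite inner_comm inner_addl !(inner_comm w). Qed.

Lemma inner_subr u v w : inner w (vsub u v) = inner w u - inner w v.
Proof. by rewrite inner_comm inner_subl !(inner_comm w). Qed.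

Lemma inner_scaler a u w : inner w (vscale a u) = a * inner w u.
Proof. by rewrite inner_comm inner_scalel (inner_comm w). Qed.

Lemma inner_self_ge_coord u i : u i * u i <= inner u u.
Proof.
rewrite /inner (bigD1 i) //= -[X in X <= _]Rplus_0_r.
apply: Rplus_le_compat_l.
by apply: (big_rec (fun s => 0 <= s)) => [|j s _ Hs]; nra.
Qed.

Lemma inner_self_ge0 u : 0 <= inner u u.
Proof. by apply: (big_rec (fun s => 0 <= s)) => [|i s _ Hs]; nra. Qed.

Lemma inner_self_eq0 u : inner u u = 0 -> forall i, u i = 0.
Proof. by move=> H i; have := inner_self_ge_coord u i; nra. Qed.

Lemma vnorm_ge0 u : 0 <= vnorm u.
Proof. exact: sqrt_pos. Qed.

Lemma vnorm_sq u : vnorm u ^ 2 = inner u u.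
Proof. by rewrite /vnorm pow2_sqrt //; apply: inner_self_ge0. Qed.

Lemma vnorm_scale a u : vnorm (vscale a u) = Rabs a * vnorm u.
Proof.
rewrite /vnorm inner_scalel inner_scaler -Rmult_assoc sqrt_mult;
  [by rewrite -sqrt_Rsqr_abs | nra | exact: inner_self_ge0].
Qed.

Lemma vnorm_scale_ge0 a u : 0 <= a -> vnorm (vscale a u) = a * vnorm u.
Proof. by move=> a_ge0; rewrite vnorm_scale Rabs_pos_eq. Qed.

Lemma vnorm_subC u v : vnorm (vsub u v) = vnorm (vsub v u).
Proof.
have -> : vsub u v = vscale (-1) (vsub v u) by vec_ext; ring.
by rewrite vnorm_scale Rabs_Ropp Rabs_R1 Rmult_1_l.
Qed.

Lemma vnorm_add_sq u v :
  vnorm (vadd u v) ^ 2 = vnorm u ^ 2 + 2 * inner u v + vnorm v ^ 2.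
Proof. by rewrite !vnorm_sq !inner_addl !inner_addr (inner_comm v u); ring. Qed.

Lemma quadratic_ge0_discr a b c :
  0 <= a -> (forall t, 0 <= a * t ^ 2 - 2 * b * t + c) -> b ^ 2 <= a * c.
Proof.
move=> a_ge0 Hq; case: (Rle_lt_or_eq_dec _ _ a_ge0) => [a_gt0 | a_eq0].
- have := Rmult_le_pos _ _ a_ge0 (Hq (b / a)).
  have -> : a * (a * (b / a) ^ 2 - 2 * b * (b / a) + c) = a * c - b ^ 2
    by field; lra.
  lra.
- subst a; case: (Req_dec b 0) => [-> | b_neq0]; first by lra.
  have := Hq ((c + 1) / (2 * b)).
  have -> : 0 * ((c + 1) / (2 * b)) ^ 2 - 2 * b * ((c + 1) / (2 * b)) + c = -1
    by field.
  lra.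
Qed.

Lemma inner_le_vnorm u v : inner u v <= vnorm u * vnorm v.
Proof.
have Hcs : inner u v ^ 2 <= inner v v * inner u u.
  apply: quadratic_ge0_discr; first exact: inner_self_ge0.
  move=> t; have := inner_self_ge0 (vsub u (vscale t v)).
  rewrite !inner_subl !inner_subr !inner_scalel !inner_scaler (inner_comm v u).
  by move=> H; apply: (Rle_trans _ _ _ H); apply: Req_le; ring.
rewrite -!vnorm_sq in Hcs.
apply: Rsqr_incr_0_var; last by apply: Rmult_le_pos; apply: vnorm_ge0.
by rewrite !Rsqr_pow2; lra.
Qed.

Lemma vnorm_triangle u v : vnorm (vadd u v) <= vnorm u + vnorm v.
Proof.
have Hsq := vnorm_add_sq u v; have := inner_le_vnorm u v.
have := vnorm_ge0 (vadd u v); have := vnorm_ge0 u; have := vnorm_ge0 v; move=> *; nra.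
Qed.

End InnerProduct.

Section Gradient.
Context {n : nat}.
Implicit Types u v w d : vec n.

Lemma is_gradient_dir (h : vec n -> R) G v d eps :
  is_gradient h G -> 0 < vnorm d -> 0 < eps ->
  exists lam, 0 < lam <= 1 /\
    Rabs (h (vadd v (vscale lam d)) - h v - lam * inner (G v) d)
      <= eps * lam * vnorm d.
Proof.
move=> HG d_gt0 eps_gt0; have [del [del_gt0 Hdel]] := HG v eps eps_gt0.
set lam := Rmin 1 (del / (2 * vnorm d)).
have lam_gt0 : 0 < lam.
  by apply: Rmin_glb_lt; [lra | apply: Rdiv_lt_0_compat; lra].
have lam_le : lam * vnorm d <= del / 2.
  have -> : del / 2 = del / (2 * vnorm d) * vnorm d by field; lra.
  by apply: Rmult_le_compat_r; [lra | apply: Rmin_r].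
exists lam; split; first by split; [|apply: Rmin_l].
have Hnorm : vnorm (vscale lam d) = lam * vnorm d by apply: vnorm_scale_ge0; lra.
have := Hdel (vscale lam d); rewrite Hnorm inner_scaler Rmult_assoc.
by apply; split; [apply: Rmult_lt_0_compat | lra].
Qed.

Lemma is_gradient_add_sqnorm (h : vec n -> R) G c a :
  is_gradient h G ->
  is_gradient (fun v => h v + c * vnorm (vsub v a) ^ 2)
              (fun v => vadd (G v) (vscale (2 * c) (vsub v a))).
Proof.
move=> HG v eps eps_gt0.
have [del [del_gt0 Hdel]] := HG v (eps / 2) ltac:(lra).
have c_gt0 : 0 < Rabs c + 1 by have := Rabs_pos c; lra.
exists (Rmin del (eps / (2 * (Rabs c + 1)))); split.
  by apply: Rmin_glb_lt; last apply: Rdiv_lt_0_compat; lra.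
move=> w [w_gt0 w_lt].
have Hsq : vnorm (vsub (vadd v w) a) ^ 2
           = vnorm (vsub v a) ^ 2 + 2 * inner (vsub v a) w + vnorm w ^ 2.
  by rewrite -vnorm_add_sq; congr (vnorm _ ^ 2); vec_ext; ring.
have Hc : Rabs c * vnorm w <= eps / 2.
  have := Rlt_le_trans _ _ _ w_lt (Rmin_r _ _).
  have -> : eps / 2 = Rabs c * (eps / (2 * (Rabs c + 1))) + eps / (2 * (Rabs c + 1))
    by field; lra.
  have := Rabs_pos c; have : 0 < eps / (2 * (Rabs c + 1)) by apply: Rdiv_lt_0_compat; lra.
  move=> *; nra.
have Hh := Hdel w (conj w_gt0 (Rlt_le_trans _ _ _ w_lt (Rmin_l _ _))).
rewrite Hsq inner_addl inner_scalel.
have -> : h (vadd v w) + c * (vnorm (vsub v a) ^ 2 + 2 * inner (vsub v a) w + vnorm w ^ 2)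
          - (h v + c * vnorm (vsub v a) ^ 2) - (inner (G v) w + 2 * c * inner (vsub v a) w)
          = (h (vadd v w) - h v - inner (G v) w) + c * vnorm w ^ 2 by ring.
apply: (Rle_trans _ _ _ (Rabs_triang _ _)).
rewrite Rabs_mult (Rabs_pos_eq (vnorm w ^ 2)); last exact: pow2_ge_0.
have : Rabs c * vnorm w * vnorm w <= eps / 2 * vnorm w by apply: Rmult_le_compat_r; lra.
lra.
Qed.

Lemma is_gradient_min_eq0 (h : vec n -> R) G y :
  is_gradient h G -> (forall v, h y <= h v) -> forall i, G y i = 0.
Proof.
move=> HG Hmin; apply: inner_self_eq0; rewrite -vnorm_sq.
case: (Rle_lt_or_eq_dec _ _ (vnorm_ge0 (G y))) => [s_gt0 | <-]; last by ring.
exfalso; set s := vnorm (G y) in s_gt0 *; set d := vscale (-1) (G y).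
have Hd : vnorm d = s by rewrite vnorm_scale Rabs_Ropp Rabs_R1 Rmult_1_l.
have Gd : inner (G y) d = - s ^ 2 by rewrite inner_scaler /s vnorm_sq; ring.
have d_gt0 : 0 < vnorm d by rewrite Hd.
have [lam [[lam_gt0 _] Hlam]] := is_gradient_dir h G y d (s / 2) HG d_gt0 ltac:(lra).
rewrite Gd Hd in Hlam; have := Rle_trans _ _ _ (Rle_abs _) Hlam.
have : 0 < lam * s ^ 2 by apply: Rmult_lt_0_compat => //; apply: pow_lt.
have := Hmin (vadd y (vscale lam d)).
lra.
Qed.

Lemma convex_gradient_ineq (h : vec n -> R) G u v :
  is_gradient h G -> convex_fun h -> h v + inner (G v) (vsub u v) <= h u.
Proof.
move=> HG Hconv; set d := vsub u v.
case: (Rle_lt_or_eq_dec _ _ (vnorm_ge0 d)) => [d_gt0 | d_eq0].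
- apply: Rle_plus_epsilon => e e_gt0.
  have [lam [[lam_gt0 lam_le1] Hlam]] :=
    is_gradient_dir h G v d (e / vnorm d) HG d_gt0 (Rdiv_lt_0_compat _ _ e_gt0 d_gt0).
  have {}Hlam : lam * inner (G v) d <= h (vadd v (vscale lam d)) - h v + lam * e.
    have -> : lam * e = e / vnorm d * lam * vnorm d by field; lra.
    by rewrite -Rabs_Ropp in Hlam; have := Rle_trans _ _ _ (Rle_abs _) Hlam; lra.
  have := Hconv u v lam (conj (Rlt_le _ _ lam_gt0) lam_le1).
  have -> : vadd (vscale lam u) (vscale (1 - lam) v) = vadd v (vscale lam d)
    by vec_ext; rewrite /d /vsub; ring.
  move=> Hc; apply: (Rmult_le_reg_l lam) => //; lra.
- have Huv : u = v.
    apply: functional_extensionality => i.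
    have := inner_self_eq0 d; rewrite -vnorm_sq -d_eq0 => /(_ ltac:(ring) i).
    by rewrite /d /vsub; lra.
  have := inner_le_vnorm (G v) d; rewrite -d_eq0 Huv; lra.
Qed.

Lemma strongly_convex_gradient_ineq (f : vec n -> R) gradf sigma u v :
  is_gradient f gradf -> strongly_convex f sigma ->
  f v + inner (gradf v) (vsub u v) + sigma / 2 * vnorm (vsub u v) ^ 2 <= f u.
Proof.
move=> Hgrad Hsc.
have Hgrad' : is_gradient (fun x => f x - sigma / 2 * vnorm x ^ 2)
                          (fun x => vadd (gradf x) (vscale (- sigma) x)).
  have := is_gradient_add_sqnorm f gradf (- (sigma / 2)) (fun _ => 0) Hgrad.
  have Hsub0 : forall x : vec n, vsub x (fun _ => 0) = x by move=> x; vec_ext; ring.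
  have -> : (fun x => f x - sigma / 2 * vnorm x ^ 2)
            = (fun x => f x + - (sigma / 2) * vnorm (vsub x (fun _ => 0)) ^ 2).
    by apply: functional_extensionality => x; rewrite Hsub0; ring.
  have -> // : (fun x => vadd (gradf x) (vscale (- sigma) x))
               = (fun x => vadd (gradf x) (vscale (2 * - (sigma / 2)) (vsub x (fun _ => 0)))).
  by apply: functional_extensionality => x; rewrite Hsub0; vec_ext; field.
have := convex_gradient_ineq _ _ u v Hgrad' Hsc.
have Hsq : vnorm u ^ 2 = vnorm v ^ 2 + 2 * inner v (vsub u v) + vnorm (vsub u v) ^ 2.
  by rewrite -vnorm_add_sq; congr (vnorm _ ^ 2); vec_ext; ring.
rewrite inner_addl inner_scalel Hsq; lra.
Qed.

Lemma strongly_convex_gradient_monotone (f : vec n -> R) gradf sigma u v :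
  is_gradient f gradf -> strongly_convex f sigma ->
  sigma * vnorm (vsub u v) ^ 2 <= inner (vsub (gradf u) (gradf v)) (vsub u v).
Proof.
move=> Hgrad Hsc.
have := strongly_convex_gradient_ineq f gradf sigma u v Hgrad Hsc.
have := strongly_convex_gradient_ineq f gradf sigma v u Hgrad Hsc.
rewrite (vnorm_subC v u) inner_subl !inner_subr.
lra.
Qed.

Lemma lipschitz_inner_sub_le (F : vec n -> vec n) L u v :
  lipschitz F L -> inner (vsub (F u) (F v)) (vsub u v) <= L * vnorm (vsub u v) ^ 2.
Proof.
move=> HF; apply: (Rle_trans _ _ _ (inner_le_vnorm _ _)).
rewrite /= Rmult_1_r -Rmult_assoc.
by apply: Rmult_le_compat_r; [apply: vnorm_ge0 | apply: HF].
Qed.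

Lemma lipschitz_vnorm_sq_le (F : vec n -> vec n) L u v :
  lipschitz F L -> vnorm (vsub (F u) (F v)) ^ 2 <= L ^ 2 * vnorm (vsub u v) ^ 2.
Proof.
move=> HF; rewrite -Rpow_mult_distr.
by apply: pow_incr; split; [apply: vnorm_ge0 | apply: HF].
Qed.

End Gradient.

(* [lra] treats [inner u v] and [inner v u] as unrelated atoms. *)
Ltac inner_comm_facts :=
  repeat match goal with
  | |- context [inner ?u ?v] =>
      lazymatch goal with
      | _ : inner u v = inner v u |- _ => fail
      | _ : inner v u = inner u v |- _ => fail
      | _ => have := inner_comm u v; move=> ?
      end
  end.

Lemma PR_coupling_identity {n} (xm y0 z0 x0 y1 z1 x1 : vec n) :
  x0 = vadd xm (vscale 2 (vsub z0 y0)) -> x1 = vadd x0 (vscale 2 (vsub z1 y1)) ->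
  (- 3 / 2 * vnorm (vsub y1 z1) ^ 2 + inner (vsub x1 y1) (vsub z1 y1))
  - (- 3 / 2 * vnorm (vsub y0 z0) ^ 2 + inner (vsub x0 y0) (vsub z0 y0))
  = 1 / 2 * (vnorm (vsub (vsub (vscale 2 y1) x0) z1) ^ 2
             - vnorm (vsub (vsub (vscale 2 y1) x0) z0) ^ 2)
    - inner (vsub x0 y1) (vsub y1 y0)
    + 1 / 2 * vnorm (vsub (vsub x0 y1) (vsub xm y0)) ^ 2.
Proof.
(* [vsub] must go first: [inner_addl] would also match it up to unfolding. *)
move=> -> ->; rewrite !vnorm_sq !vsubE.
repeat rewrite ?inner_addl ?inner_scalel ?inner_addr ?inner_scaler.
inner_comm_facts; lra.
Qed.

Lemma argmin_value_finite {n} (g : vec n -> ereal) (r : vec n -> R) z :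
  proper_fun g -> (forall v, ele (eaffine 1 (g z) (r z)) (eaffine 1 (g v) (r v))) ->
  exists a, g z = Some a.
Proof.
move=> [w Hw] Hmin; have := Hmin w.
by case: (g z) => [a _|]; [exists a | case: (g w) Hw].
Qed.

Section PeacemanRachford.
Variables (n : nat) (f : vec n -> R) (gradf : vec n -> vec n) (g : vec n -> ereal).
Variables (sigma L gamma : R) (y z x : nat -> vec n).
Hypotheses (Hgamma : 0 < gamma) (Hgrad : is_gradient f gradf).
Hypothesis Hiter : PR_iter f g gamma y z x.

Lemma PR_gradf_eq t : gradf (y (S t)) = vscale (1 / gamma) (vsub (x t) (y (S t))).
Proof.
have Hgrad' := is_gradient_add_sqnorm f gradf (1 / (2 * gamma)) (x t) Hgrad.
have H0 := is_gradient_min_eq0 _ _ (y (S t)) Hgrad' (Hiter t).1.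
vec_ext; have := H0 i; rewrite /vadd /vscale /vsub => Hi.
have -> : gradf (y (S t)) i = - (2 * (1 / (2 * gamma)) * (y (S t) i - x t i)) by lra.
by field; lra.
Qed.

Lemma PR_x_sub t : vsub (x (S t)) (x t) = vscale 2 (vsub (z (S t)) (y (S t))).
Proof. by rewrite (Hiter t).2.2; vec_ext; ring. Qed.

Lemma PR_x_sub_gradf t :
  vsub (x (S t)) (x t)
  = vadd (vscale gamma (vsub (gradf (y (S (S t)))) (gradf (y (S t)))))
         (vsub (y (S (S t))) (y (S t))).
Proof. by rewrite !PR_gradf_eq; vec_ext; field; lra. Qed.

Hypothesis Hproper : proper_fun g.

Lemma PR_g_finite t : exists a, g (z (S t)) = Some a.
Proof.
exact: (argmin_value_finite _
  (fun v => 1 / (2 * gamma) * vnorm (vsub (vsub (vscale 2 (y (S t))) (x t)) v) ^ 2)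
  _ Hproper (Hiter t).2.1).
Qed.

Lemma PR_x_sub_vnorm_eq t :
  2 * vnorm (vsub (y (S t)) (z (S t))) = vnorm (vsub (x (S t)) (x t)).
Proof. by rewrite PR_x_sub vnorm_scale_ge0 ?(vnorm_subC (z _)) //; lra. Qed.

Hypothesis Hlip : lipschitz gradf L.

Lemma PR_x_sub_vnorm_le t :
  vnorm (vsub (x (S t)) (x t))
  <= (1 + gamma * L) * vnorm (vsub (y (S (S t))) (y (S t))).
Proof.
rewrite PR_x_sub_gradf; apply: (Rle_trans _ _ _ (vnorm_triangle _ _)).
rewrite vnorm_scale_ge0; last lra.
have := Hlip (y (S (S t))) (y (S t)); have := Rlt_le _ _ Hgamma; move=> *; nra.
Qed.

Hypothesis Hsc : strongly_convex f sigma.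

Lemma PR_merit_descent t :
  exists p1 p0 : R,
    merit f g gamma (y (S (S t))) (z (S (S t))) (x (S (S t))) = Some p1 /\
    merit f g gamma (y (S t)) (z (S t)) (x (S t)) = Some p0 /\
    p1 - p0 <= 1 / 2 * (- 3 * sigma + 2 * L + gamma * L ^ 2)
               * vnorm (vsub (y (S (S t))) (y (S t))) ^ 2.
Proof.
have [g0 Hg0] := PR_g_finite t; have [g1 Hg1] := PR_g_finite (S t).
have Hz := (Hiter (S t)).2.1 (z (S t)); rewrite Hg0 Hg1 in Hz; cbn [eaffine ele] in Hz.
rewrite /merit Hg0 Hg1; cbn [eaffine]; do 2 eexists; do 2 (split; first reflexivity).
have Hid := PR_coupling_identity (x t) _ _ _ _ _ _ (Hiter t).2.2 (Hiter (S t)).2.2.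
have Hsc1 := strongly_convex_gradient_ineq f gradf sigma (y (S t)) (y (S (S t))) Hgrad Hsc.
rewrite vnorm_subC in Hsc1.
have Hmono := strongly_convex_gradient_monotone f gradf sigma (y (S (S t))) (y (S t)) Hgrad Hsc.
have Hlin := lipschitz_inner_sub_le gradf L (y (S (S t))) (y (S t)) Hlip.
have Hsq := lipschitz_vnorm_sq_le gradf L (y (S (S t))) (y (S t)) Hlip.
have E1 : inner (gradf (y (S (S t)))) (vsub (y (S t)) (y (S (S t))))
          = - (1 / gamma) * inner (vsub (x (S t)) (y (S (S t)))) (vsub (y (S (S t))) (y (S t))).
  by rewrite PR_gradf_eq inner_scalel !inner_subr; ring.
have E2 : vnorm (vsub (vsub (x (S t)) (y (S (S t)))) (vsub (x t) (y (S t))))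
          = gamma * vnorm (vsub (gradf (y (S (S t)))) (gradf (y (S t)))).
  rewrite -vnorm_scale_ge0; last lra.
  by congr vnorm; rewrite !PR_gradf_eq; vec_ext; field; lra.
rewrite E1 in Hsc1; rewrite E2 in Hid.
have Hid' := f_equal (Rmult (1 / gamma)) Hid.
set G := vnorm (vsub (gradf (y (S (S t)))) (gradf (y (S t)))) in Hid' Hsq.
have Hg2 : 1 / gamma * (1 / 2 * (gamma * G) ^ 2) = gamma / 2 * G ^ 2 by field; lra.
have HgL : gamma / 2 * G ^ 2 <= gamma / 2 * (L ^ 2 * vnorm (vsub (y (S (S t))) (y (S t))) ^ 2).
  by apply: Rmult_le_compat_l; lra.
have Hc : forall k, k / (2 * gamma) = k / 2 * (1 / gamma) by move=> k; field; lra.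
rewrite !Hc in Hz *.
lra.
Qed.

End PeacemanRachford.

Theorem mainTheorem2 (n : nat) (f : vec n -> R) (gradf : vec n -> vec n)
    (g : vec n -> ereal) (sigma L gamma : R)
    (Hsigma : 0 < sigma) (HL : 0 < L) (Hgamma : 0 < gamma)
    (Hgrad : is_gradient f gradf)
    (Hsc : strongly_convex f sigma)
    (Hlip : lipschitz gradf L)
    (Hproper : proper_fun g) (Hlsc : lsc g)
    (Hprox : forall w : vec n, exists u : vec n, in_prox_argmin g gamma w u)
    (y z x : nat -> vec n)
    (Hiter : PR_iter f g gamma y z x) :
  forall t : nat, (1 <= t)%nat ->
    (exists p1 p0 : R,
       merit f g gamma (y (S t)) (z (S t)) (x (S t)) = Some p1 /\
       merit f g gamma (y t) (z t) (x t) = Some p0 /\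
       p1 - p0 <= 1 / 2 * (- 3 * sigma + 2 * L + gamma * L ^ 2)
                  * (vnorm (vsub (y (S t)) (y t))) ^ 2) /\
    2 * vnorm (vsub (y t) (z t)) = vnorm (vsub (x t) (x (Nat.pred t))) /\
    vnorm (vsub (x t) (x (Nat.pred t))) <= (1 + gamma * L) * vnorm (vsub (y (S t)) (y t)).
Proof.
case=> [|t] // _; rewrite [Nat.pred _]/=.
split; first exact: PR_merit_descent Hgamma Hgrad Hiter Hproper Hlip Hsc t.
split; first exact: PR_x_sub_vnorm_eq Hiter t.
exact: PR_x_sub_vnorm_le Hgamma Hgrad Hiter Hlip t.
Qed.
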